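(* Let $q=p^k$ be a power of a prime $p$, $m\ge1$, and let $U_2$ act on $\mathbb{F}_q[x,y]$ fixing $x$ and sending $y\mapsto y+ax$, $a\in\mathbb{F}_q$. Put $V_2=y^q-yx^{q-1}$. Then the images in $Q(m,2)=\mathbb{F}_q[x,y]/(x^{q^m},y^{q^m})$ of the following two families of polynomials form an $\mathbb{F}_q$-basis of $Q(m,2)^{U_2}$: (1) $x^iy^j$ with $0\le i\le q^m-1$, $0\le j\le q^m-1$, $q\nmid j$, and $i+p^{v_p(j)}\ge q^m$; (2) $x^aV_2^b$ with $0\le a\le q^m-1$ and $0\le b\le q^{m-1}-1$.
   Context: $v_p(j)$ denotes the $p$-adic valuation of the positive integer $j$. $U_2\subset GL_2(\mathbb{F}_q)$ is the group of upper triangular matrices with diagonal entries $1$, acting on $\mathbb{F}_q[x,y]$ (with $x=x_1$, $y=x_2$) via $\sigma(x_j)=\sum_i\sigma_{ij}x_i$, and the action descends to $Q(m,2)$; $Q(m,2)^{U_2}$ is the subring of fixed elements. *)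

From HB Require Import structures.
From mathcomp Require Import all_boot all_order all_algebra all_field.
From mathcomp Require Import mpoly.
Set Implicit Arguments. Unset Strict Implicit. Unset Printing Implicit Defensive.
Import GRing.Theory.
Local Open Scope ring_scope.

Definition mX (F : finFieldType) : {mpoly F[2]} := 'X_(ord0 : 'I_2).
Definition mY (F : finFieldType) : {mpoly F[2]} := 'X_(ord_max : 'I_2).

Definition U2act (F : finFieldType) (a : F) (f : {mpoly F[2]}) : {mpoly F[2]} :=
  f \mPo [tuple mX F; mY F + a *: mX F].

(* membership in the ideal (x^N, y^N) of F[x,y]; Q(m,2) = F[x,y]/(x^N,y^N), N = q^m *)
Definition inQideal (F : finFieldType) (N : nat) (f : {mpoly F[2]}) : Prop :=
  exists g h : {mpoly F[2]}, f = mX F ^+ N * g + mY F ^+ N * h.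

Definition QU2inv (F : finFieldType) (N : nat) (f : {mpoly F[2]}) : Prop :=
  forall a : F, inQideal N (U2act a f - f).

Definition V2 (F : finFieldType) : {mpoly F[2]} :=
  mY F ^+ #|F| - mY F * mX F ^+ (#|F|.-1).

Definition isBasisQU2 (F : finFieldType) (N : nat) (I : finType) (P : pred I)
    (b : I -> {mpoly F[2]}) : Prop :=
  [/\ forall i, P i -> QU2inv N (b i),
      forall c : I -> F, inQideal N (\sum_(i | P i) c i *: b i) ->
        forall i, P i -> c i = 0
    & forall f : {mpoly F[2]}, QU2inv N f ->
        exists c : I -> F, inQideal N (f - \sum_(i | P i) c i *: b i)].

(* index set: family (1) indexed by (i,j), family (2) indexed by (a,b) *)
Definition famIdx (N M : nat) : finType := (('I_N * 'I_N) + ('I_N * 'I_M))%type.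

Definition famPred (q p N M : nat) : pred (famIdx N M) :=
  fun t => match t with
           | inl ij => ~~ (q %| ij.2)%N && (N <= ij.1 + p ^ logn p ij.2)%N
           | inr _ => true
           end.

Definition famPoly (F : finFieldType) (N M : nat) (t : famIdx N M) : {mpoly F[2]} :=
  match t with
  | inl ij => mX F ^+ ij.1 * mY F ^+ ij.2
  | inr ab => mX F ^+ ab.1 * V2 F ^+ ab.2
  end.

(* Write N = q ^ m and sigma_a for the substitution y |-> y + a x.  Both families
   are invariant modulo (x^N, y^N): V_2 is fixed because (y + a x)^q = y^q + a x^q,
   and if P = p^(v_p(j)) then sigma_a(y^j) - y^j = (y^P + a^P x^P)^(j/P) - (y^P)^(j/P)
   is a multiple of x^P, which kills x^i as soon as i + P >= N.
   The monomials of x^a V_2^b have y-degree at most q b, and x^a y^(q b) is the only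
   one of y-degree q b, whereas family (1) avoids y-degrees divisible by q.  Reading
   coefficients at the exponents (u, q b) from the top layer b down therefore gives
   independence, and for spanning lets one subtract multiples of the x^a V_2^b until
   all these coefficients vanish; then one subtracts the monomials of family (1).
   The remainder h is invariant and supported on exponents (u, w) with q not dividing
   w and u + P < N, where P = p^(v_p(w)) < q.  For such (u, w) with w maximal, the
   coefficient of x^(u+P) y^(w-P) in sigma_a h - h is a polynomial in a of degree at
   most P < q vanishing on all of F_q; its a^P-coefficient is C(w, P) h_(u,w), and
   C(w, P) is prime to p.  Hence h = 0. *)

From Pilot Require Import Defs.
From HB Require Import structures.
From mathcomp Require Import all_boot all_order all_algebra all_field.
From mathcomp Require Import mpoly.
From mathcomp Require Import zify ring.
Set Implicit Arguments. Unset Strict Implicit. Unset Printing Implicit Defensive.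
Import GRing.Theory.
Local Open Scope ring_scope.

Section MonomialCoefficients.
Variables (n : nat) (R : ringType).
Implicit Types (f g : {mpoly R[n]}) (m k : 'X_{1..n}).

Lemma mcoeffXM m g k :
  ('X_[m] * g)@_k = if (m <= k)%MM then g@_(k - m) else 0.
Proof.
rewrite -commr_mpolyX; case: ifP => [le_mk | nle_mk].
  by rewrite -{1}(submK le_mk) addmC mcoeffMX.
apply/eqP; rewrite mcoeff_eq0 (perm_mem (msuppMX g m)); apply/mapP => -[k' _ Ek].
by rewrite Ek lem_addr in nle_mk.
Qed.

Lemma mcoeff_msupp_filter (P : pred 'X_{1..n}) f k :
  (\sum_(m <- msupp f | P m) f@_m *: 'X_[m])@_k = if P k then f@_k else 0.
Proof.
rewrite raddf_sum big_mkcond /=.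
under eq_bigr => m _ do rewrite mcoeffZ mcoeffX.
have [k_in | k_notin] := boolP (k \in msupp f).
  rewrite (bigD1_seq k) ?msupp_uniq //= eqxx mulr1 big1 ?addr0 // => m /negbTE.
  by rewrite eq_sym => ->; rewrite mulr0 if_same.
rewrite (memN_msupp_eq0 k_notin) if_same big1_seq // => m /= m_in.
have /negbTE -> : m != k by apply: contraNneq k_notin => <-.
by rewrite mulr0 if_same.
Qed.

End MonomialCoefficients.

Definition mnm2 (i j : nat) : 'X_{1..2} :=
  (U_(ord0 : 'I_2) *+ i + U_(ord_max : 'I_2) *+ j)%MM.

Notation "f @_( i , j )" := (f@_(mnm2 i j))
  (at level 3, left associativity, format "f @_( i ,  j )") : ring_scope.

Section TwoVariableMonomials.
Implicit Types (i j u w : nat) (m : 'X_{1..2}).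

Lemma mnm2_ord0 i j : mnm2 i j ord0 = i.
Proof. by rewrite mnmDE !mulmnE !mnm1E /=; lia. Qed.

Lemma mnm2_ordmax i j : mnm2 i j ord_max = j.
Proof. by rewrite mnmDE !mulmnE !mnm1E /=; lia. Qed.

Lemma mnm2K m : mnm2 (m ord0) (m ord_max) = m.
Proof.
apply/mnmP => -[[|[|//]] lt_i2].
  by rewrite (_ : Ordinal lt_i2 = ord0) ?mnm2_ord0 //; apply: val_inj.
by rewrite (_ : Ordinal lt_i2 = ord_max) ?mnm2_ordmax //; apply: val_inj.
Qed.

Lemma eq_mnm2 i j u w : (mnm2 i j == mnm2 u w) = (i == u) && (j == w).
Proof.
apply/eqP/andP => [E | [/eqP-> /eqP->] //].
by split; apply/eqP;
  [rewrite -(mnm2_ord0 i j) E mnm2_ord0 | rewrite -(mnm2_ordmax i j) E mnm2_ordmax].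
Qed.

Lemma mnm2D i j u w : (mnm2 i j + mnm2 u w)%MM = mnm2 (i + u) (j + w).
Proof. by rewrite -[LHS]mnm2K !mnmDE !mulmnE !mnm1E /=; congr mnm2; lia. Qed.

Lemma lem_mnm2 i j u w : (mnm2 i j <= mnm2 u w)%MM = (i <= u)%N && (j <= w)%N.
Proof.
apply/forallP/andP => [le_ij_uw | [le_iu le_jw] [[|[|//]] lt_i2]].
  by move: (le_ij_uw ord0) (le_ij_uw ord_max); rewrite !mnm2_ord0 !mnm2_ordmax.
  by rewrite (_ : Ordinal lt_i2 = ord0) ?mnm2_ord0 //; apply: val_inj.
by rewrite (_ : Ordinal lt_i2 = ord_max) ?mnm2_ordmax //; apply: val_inj.
Qed.

Lemma mnm2B i j u w : (mnm2 u w - mnm2 i j)%MM = mnm2 (u - i) (w - j).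
Proof. by rewrite -[LHS]mnm2K !mnmBE !mnmDE !mulmnE !mnm1E /=; congr mnm2; lia. Qed.

End TwoVariableMonomials.

Section TwoVariableCoefficients.
Variable R : ringType.
Implicit Types (f g : {mpoly R[2]}) (i j u w : nat).

Lemma mcoeffX2 i j u w : ('X_[mnm2 i j] : {mpoly R[2]})@_(u, w) = ((i == u) && (j == w))%:R.
Proof. by rewrite mcoeffX eq_mnm2. Qed.

Lemma mcoeffXM2 i j g u w :
  ('X_[mnm2 i j] * g)@_(u, w) =
    if (i <= u)%N && (j <= w)%N then g@_(u - i, w - j) else 0.
Proof. by rewrite mcoeffXM lem_mnm2 mnm2B. Qed.

End TwoVariableCoefficients.

Section QuotientBox.
Variable F : finFieldType.
Local Notation R := {mpoly F[2]}.
Local Notation X := (Defs.mX F).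
Local Notation Y := (Defs.mY F).
Implicit Types (f g h : R) (c : F) (i j u w N : nat).

Lemma mXY_mnm2 i j : X ^+ i * Y ^+ j = 'X_[mnm2 i j].
Proof. by rewrite /Defs.mX /Defs.mY !mpolyXn -mpolyXD. Qed.

Lemma mXn_mnm2 i : X ^+ i = 'X_[mnm2 i 0].
Proof. by rewrite -mXY_mnm2 mulr1. Qed.

Lemma mYn_mnm2 j : Y ^+ j = 'X_[mnm2 0 j].
Proof. by rewrite -mXY_mnm2 mul1r. Qed.

Definition box_free N f := forall u w, (u < N)%N -> (w < N)%N -> f@_(u, w) = 0.

Definition box_trunc N f : R :=
  \sum_(m <- msupp f | (m ord0 < N)%N && (m ord_max < N)%N) f@_m *: 'X_[m].

Lemma mcoeff_box_trunc N f u w :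
  (box_trunc N f)@_(u, w) = if (u < N)%N && (w < N)%N then f@_(u, w) else 0.
Proof. by rewrite mcoeff_msupp_filter mnm2_ord0 mnm2_ordmax. Qed.

Lemma box_free_sub_trunc N f : box_free N (f - box_trunc N f).
Proof. by move=> u w lt_uN lt_wN; rewrite mcoeffB mcoeff_box_trunc lt_uN lt_wN subrr. Qed.

Lemma box_free0 N : box_free N 0.
Proof. by move=> u w _ _; rewrite mcoeff0. Qed.

Lemma box_freeD N f g : box_free N f -> box_free N g -> box_free N (f + g).
Proof. by move=> free_f free_g u w lt_uN lt_wN; rewrite mcoeffD free_f ?free_g ?addr0. Qed.

Lemma box_freeB N f g : box_free N f -> box_free N g -> box_free N (f - g).
Proof. by move=> free_f free_g u w lt_uN lt_wN; rewrite mcoeffB free_f ?free_g ?subr0. Qed.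

Lemma box_freeZ N c f : box_free N f -> box_free N (c *: f).
Proof. by move=> free_f u w lt_uN lt_wN; rewrite mcoeffZ free_f ?mulr0. Qed.

Lemma box_free_sum N (I : finType) (P : pred I) (G : I -> R) :
  (forall t, P t -> box_free N (G t)) -> box_free N (\sum_(t | P t) G t).
Proof. by move=> free_G; apply: big_ind; [apply: box_free0 | apply: box_freeD |]. Qed.

Lemma inQidealP N f : inQideal N f <-> box_free N f.
Proof.
split=> [[g [h ->]] u w lt_uN lt_wN | free_f].
  rewrite mcoeffD mXn_mnm2 mYn_mnm2 !mcoeffXM2.
  by rewrite !ifF ?addr0 //; apply/negbTE; rewrite negb_and -!ltnNge ?lt_uN ?lt_wN ?orbT.
pose big_x (m : 'X_{1..2}) := (N <= m ord0)%N.
pose big_y (m : 'X_{1..2}) := (N <= m ord_max)%N.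
exists (\sum_(m <- msupp f | big_x m) f@_m *: 'X_[mnm2 (m ord0 - N) (m ord_max)]).
exists (\sum_(m <- msupp f | ~~ big_x m && big_y m)
          f@_m *: 'X_[mnm2 (m ord0) (m ord_max - N)]).
have Ef : f = \sum_(m <- msupp f | big_x m || big_y m) f@_m *: 'X_[m].
  apply/mpolyP => m; rewrite mcoeff_msupp_filter -(mnm2K m) /big_x /big_y.
  rewrite mnm2_ord0 mnm2_ordmax; case: ifPn => // /norP[].
  by rewrite -!ltnNge => /free_f free_m /free_m.
rewrite {1}Ef mXn_mnm2 mYn_mnm2 !mulr_sumr (bigID big_x) /=; congr (_ + _).
  apply: eq_big => [m | m /andP[_ bxm]]; first by case: (big_x m) (big_y m) => -[].
  by rewrite -scalerAr -mpolyXD mnm2D subnKC // add0n mnm2K.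
apply: eq_big => [m | m /andP[/orP[bxm | bym] nbxm]].
- by case: (big_x m) (big_y m) => -[].
- by rewrite bxm in nbxm.
- by rewrite -scalerAr -mpolyXD mnm2D subnKC // add0n mnm2K.
Qed.

End QuotientBox.

HB.instance Definition _ (F : finFieldType) (a : F) := GRing.RMorphism.copy (U2act a)
  (comp_mpoly [tuple Defs.mX F; Defs.mY F + a *: Defs.mX F]).
HB.instance Definition _ (F : finFieldType) (a : F) := GRing.Linear.copy (U2act a)
  (comp_mpoly [tuple Defs.mX F; Defs.mY F + a *: Defs.mX F]).

Lemma sum_ord_single (V : nmodType) n (G : nat -> V) t0 :
  (forall t, (t < n)%N -> t != t0 -> G t = 0) ->
  \sum_(t < n) G t = if (t0 < n)%N then G t0 else 0.
Proof.
move=> G0; rewrite -(big_ord1_eq (@GRing.add V) G) [RHS]big_mkcond /=.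
by apply: eq_bigr => t _; case: eqP => // /eqP; apply: G0.
Qed.

Section Action.
Variables (F : finFieldType) (a : F).
Local Notation R := {mpoly F[2]}.
Local Notation X := (Defs.mX F).
Local Notation Y := (Defs.mY F).
Local Notation sigma := (U2act a).
Implicit Types (f g h : R) (i j u w : nat).

Lemma U2act_mX : sigma X = X.
Proof. exact: comp_mpolyXU. Qed.

Lemma U2act_mY : sigma Y = Y + a *: X.
Proof. exact: comp_mpolyXU. Qed.

Lemma U2act_mnm2 i j :
  sigma 'X_[mnm2 i j] =
    \sum_(t < j.+1) ('C(j, t)%:R * a ^+ t) *: 'X_[mnm2 (i + t) (j - t)].
Proof.
rewrite -mXY_mnm2 rmorphM !rmorphXn /= U2act_mX U2act_mY exprDn mulr_sumr.
apply: eq_bigr => t _; rewrite -mXY_mnm2 exprZn exprD -!mul_mpolyC.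
by rewrite -mulr_natl mpolyCM -mpolyC_nat; ring.
Qed.

Lemma mcoeff_U2act_mnm2 i j u w :
  (sigma 'X_[mnm2 i j])@_(u, w) =
    if (i <= u)%N && (u - i + w == j)%N then 'C(j, w)%:R * a ^+ (u - i) else 0.
Proof.
rewrite U2act_mnm2 raddf_sum /=.
under eq_bigr => t _ do rewrite mcoeffZ mcoeffX eq_mnm2.
pose G t := 'C(j, t)%:R * a ^+ t * ((i + t == u)%N && (j - t == w)%N)%:R.
rewrite (@sum_ord_single _ _ G (u - i)%N) {}/G => [|t _ ne_t]; last first.
  by rewrite (_ : _ && _ = false) ?mulr0 //; lia.
have [/andP[le_iu /eqP Ej] | Nuw] := boolP ((i <= u)%N && (u - i + w == j)%N).
  rewrite ifT; last by lia.
  rewrite (_ : _ && _ = true) ?mulr1; last by lia.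
  by rewrite (_ : u - i = j - w)%N ?bin_sub //; lia.
by case: ifP => // lt_j; rewrite (_ : _ && _ = false) ?mulr0 //; lia.
Qed.

Lemma mcoeff_U2act h u w :
  (sigma h)@_(u, w) = \sum_(l < u.+1) h@_(u - l, w + l) * 'C(w + l, w)%:R * a ^+ l.
Proof.
have -> : sigma h = \sum_(m <- msupp h) h@_m *: sigma 'X_[m].
  by rewrite {1}(mpolyE h) linear_sum; apply: eq_bigr => m _; rewrite linearZ.
rewrite raddf_sum /=.
under [RHS]eq_bigr => l _ do rewrite {1}(mpolyE h) raddf_sum !mulr_suml.
rewrite exchange_big /=; apply: eq_bigr => m _.
rewrite mcoeffZ -{2}(mnm2K m) mcoeff_U2act_mnm2.
under eq_bigr => l _ do rewrite mcoeffZ mcoeffX -{2}(mnm2K m) eq_mnm2 -!mulrA.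
pose G l := ((m ord0 == u - l) && (m ord_max == w + l))%N%:R * ('C(w + l, w)%:R * a ^+ l).
rewrite -mulr_sumr (@sum_ord_single _ _ G (u - m ord0)%N) {}/G => [|l lt_l ne_l];
  last by rewrite (_ : _ && _ = false) ?mul0r //; lia.
rewrite [in RHS]ifT; last by lia.
congr (_ * _); case: ifP => [/andP[le_u /eqP Em] | Nm].
  rewrite (_ : _ && _ = true) ?mul1r; last by lia.
  by rewrite -Em addnC.
by rewrite (_ : _ && _ = false) ?mul0r //; lia.
Qed.

End Action.

Lemma exprD_pchar_pow (R : comNzRingType) p e (x y : R) :
  p \in [pchar R] -> (x + y) ^+ (p ^ e) = x ^+ (p ^ e) + y ^+ (p ^ e).
Proof.
move=> pR; apply: exprDn_pchar.
by rewrite pnatX (eq_pnat _ (pcharf_eq pR)) pnat_id ?(pcharf_prime pR).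
Qed.

Lemma coef_XnD1_pow (R : nzRingType) k n : (0 < k)%N ->
  (('X^k + 1) ^+ n : {poly R})`_k = n%:R.
Proof.
move=> k_gt0; rewrite exprD1n coef_sum.
under eq_bigr => t _ do rewrite coefMn -exprM coefXn.
rewrite (@sum_ord_single _ _ (fun t => (k == k * t)%N%:R *+ 'C(n, t)) 1%N) => [|t _ ne_t1];
  last by rewrite (_ : (k == k * t)%N = false) ?mul0rn //; nia.
by case: n => [|n] //=; rewrite muln1 eqxx bin1.
Qed.

Lemma coef_XD1_pow (R : nzRingType) n i : (('X + 1) ^+ n : {poly R})`_i = 'C(n, i)%:R.
Proof.
rewrite exprD1n coef_sum; under eq_bigr => t _ do rewrite coefMn coefXn.
rewrite (@sum_ord_single _ _ (fun t => (i == t)%:R *+ 'C(n, t)) i) => [|t _ ne_ti];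
  last by rewrite eq_sym (negbTE ne_ti) mul0rn.
by case: ltnP => [_ | lt_ni]; rewrite ?eqxx // bin_small.
Qed.

(* With P = p ^ logn p w: (1 + X)^w = (1 + X^P)^(w/P) in characteristic p, and p does not
   divide w/P. *)
Lemma bin_pfactor_logn_pchar (R : comNzRingType) p w :
  p \in [pchar R] -> (0 < w)%N -> 'C(w, p ^ logn p w)%:R != 0 :> R.
Proof.
move=> pR w_gt0; set P := (p ^ logn p w)%N.
have pr_p := pcharf_prime pR.
have [n coprime_pn Ew] := pfactor_coprime pr_p w_gt0; rewrite -/P in Ew.
have P_gt0 : (0 < P)%N by rewrite expn_gt0 prime_gt0.
rewrite -(coef_XD1_pow R) Ew mulnC exprM exprD_pchar_pow ?pchar_poly // expr1n.
by rewrite coef_XnD1_pow // -(dvdn_pcharf pR) -prime_coprime.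
Qed.

Lemma finField_poly_eq0 (F : finFieldType) (Q : {poly F}) :
  (size Q <= #|F|)%N -> (forall a, Q.[a] = 0) -> Q = 0.
Proof.
move=> le_Q_F Q0; apply: (roots_geq_poly_eq0 (rs := enum F)); rewrite ?enum_uniq //.
  by apply/allP => a _; rewrite /root Q0.
by rewrite -cardE.
Qed.

Section InvariantCoefficients.
Variables (F : finFieldType) (N : nat).
Local Notation R := {mpoly F[2]}.

Lemma QU2inv_mcoeff_bin_eq0 (h : R) (P u w : nat) :
  QU2inv N h -> (0 < P < #|F|)%N -> (P <= w)%N -> (w < N)%N -> (u + P < N)%N ->
  (forall u' w', (w < w')%N -> h@_(u', w') = 0) ->
  h@_(u, w) * 'C(w, P)%:R = 0.
Proof.
move=> inv_h /andP[P_gt0 lt_P_F] le_Pw lt_wN lt_uPN h_above.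
pose c l := h@_(u + P - l, w - P + l) * 'C(w - P + l, w - P)%:R.
pose Q := \poly_(l < P.+1) c l.
have QE a : Q.[a] = (U2act a h)@_(u + P, w - P).
  rewrite horner_poly mcoeff_U2act.
  rewrite (@big_ord_widen _ _ _ P.+1 (u + P).+1 (fun l => c l * a ^+ l)) ?ltnS ?leq_addl //.
  rewrite big_mkcond; apply: eq_bigr => l _; case: ltnP => // lt_Pl.
  by rewrite h_above ?mul0r //; lia.
have : Q - (c 0%N)%:P = 0.
  apply: finField_poly_eq0 => [|a].
    rewrite (leq_trans (size_add _ _)) // size_opp size_polyC geq_max.
    by rewrite (leq_trans (size_poly _ _)) //; case: (_ != 0); lia.
  have /inQidealP/(_ (u + P) (w - P)%N lt_uPN) := inv_h a.
  rewrite hornerD hornerN hornerC QE mcoeffB /c subn0 addn0 binn mulr1 => -> //.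
  exact: leq_ltn_trans (leq_subr _ _) lt_wN.
move/(f_equal (fun Q : {poly F} => Q`_P)).
rewrite coefB coefC (negbTE (lt0n_neq0 P_gt0)) subr0.
by rewrite coef_poly ltnSn /c addnK subnK // bin_sub // coef0.
Qed.

End InvariantCoefficients.

Section PcharAction.
Variables (F : finFieldType) (p : nat).
Hypothesis pF : p \in [pchar F].
Local Notation R := {mpoly F[2]}.
Local Notation X := (Defs.mX F).
Local Notation Y := (Defs.mY F).
Implicit Types (a : F) (f g h : R) (i j e N : nat).

Lemma pchar_mpoly : p \in [pchar R].
Proof. exact: (rmorph_pchar (mpolyC 2 (R := F))). Qed.

Lemma U2act_Ypow a e :
  U2act a (Y ^+ (p ^ e)) = Y ^+ (p ^ e) + a ^+ (p ^ e) *: X ^+ (p ^ e).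
Proof. by rewrite rmorphXn /= U2act_mY exprD_pchar_pow ?pchar_mpoly // exprZn. Qed.

Lemma box_free_U2act e a f : box_free (p ^ e) f -> box_free (p ^ e) (U2act a f).
Proof.
move=> /inQidealP[g [h ->]]; apply/inQidealP.
exists (U2act a g + a ^+ (p ^ e) *: U2act a h), (U2act a h).
rewrite rmorphD !rmorphM /= U2act_Ypow rmorphXn /= U2act_mX -!mul_mpolyC.
by ring.
Qed.

Lemma inQideal_U2act_XY a N i j e : (p ^ e %| j)%N -> (N <= i + p ^ e)%N ->
  inQideal N (U2act a (X ^+ i * Y ^+ j) - X ^+ i * Y ^+ j).
Proof.
move=> /divnK Ej le_N; set P := (p ^ e)%N in Ej le_N *.
rewrite -Ej mulnC !exprM rmorphM /= rmorphXn [U2act a ((Y ^+ P) ^+ _)]rmorphXn /=.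
rewrite U2act_mX U2act_Ypow.
rewrite -/P -mulrBr subrXX addrAC subrr add0r; set S := \sum_(_ < _) _.
exists (X ^+ (i + P - N) * (a ^+ P *: S)), 0.
by rewrite mulr0 addr0 [RHS]mulrA -exprD subnKC // exprD -!mul_mpolyC; ring.
Qed.

Section PrimePowerField.
Variable k : nat.
Hypothesis card_F : #|F| = (p ^ k)%N.

Lemma U2act_V2 a : U2act a (V2 F) = V2 F.
Proof.
have X_card : X ^+ #|F| = X * X ^+ #|F|.-1.
  by rewrite -exprS prednK // (ltn_trans _ (finNzRing_gt1 F)).
rewrite /V2 rmorphB rmorphM /= card_F U2act_Ypow -card_F rmorphXn /= expf_card.
by rewrite U2act_mX U2act_mY X_card -!mul_mpolyC; ring.
Qed.

Lemma QU2inv_eq0 N h : QU2inv N h ->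
  (forall u w, (N <= u)%N || (N <= w)%N -> h@_(u, w) = 0) ->
  (forall u w, (u < N)%N -> (w < N)%N ->
     (#|F| %| w)%N || (N <= u + p ^ logn p w)%N -> h@_(u, w) = 0) ->
  h = 0.
Proof.
move=> inv_h h_out h_good.
suff h0 d u w : (N <= w + d)%N -> h@_(u, w) = 0.
  by apply/mpolyP => m; rewrite mcoeff0 -(mnm2K m) (h0 N) ?leq_addl.
have pr_p := pcharf_prime pF.
elim: d u w => [|d IH] u w le_N_wd.
  by apply: h_out; rewrite -(addn0 w) le_N_wd orbT.
have [|/norP[]] := boolP ((N <= u) || (N <= w))%N; first exact: h_out.
rewrite -!ltnNge => lt_uN lt_wN.
have [|/norP[not_qw]] := boolP ((#|F| %| w) || (N <= u + p ^ logn p w))%N.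
  exact: h_good.
rewrite -ltnNge => lt_uPN.
have w_gt0 : (0 < w)%N by rewrite lt0n; apply: contraNneq not_qw => ->.
have lt_P_F : (0 < p ^ logn p w < #|F|)%N.
  rewrite expn_gt0 prime_gt0 // card_F ltn_exp2l ?prime_gt1 // ltnNge.
  by apply: contra not_qw; rewrite card_F pfactor_dvdn.
have h_above u' w' : (w < w')%N -> h@_(u', w') = 0 by move=> ?; apply: IH; lia.
have /eqP := QU2inv_mcoeff_bin_eq0 inv_h lt_P_F (dvdn_leq w_gt0 (pfactor_dvdnn p w))
  lt_wN lt_uPN h_above.
by rewrite mulf_eq0 (negbTE (bin_pfactor_logn_pchar pF w_gt0)) orbF => /eqP.
Qed.

End PrimePowerField.

End PcharAction.

Section V2Powers.
Variable F : finFieldType.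
Local Notation q := #|F|.
Local Notation X := (Defs.mX F).
Implicit Types (i b u w : nat).

Lemma V2_mnm2 : V2 F = 'X_[mnm2 0 q] - 'X_[mnm2 q.-1 1].
Proof. by rewrite /V2 -!mXY_mnm2 mul1r mulrC expr1. Qed.

Lemma mcoeff_V2pow b u w : (q * b <= w)%N ->
  (V2 F ^+ b)@_(u, w) = ((u == 0) && (w == q * b))%N%:R.
Proof.
have q_gt1 := finNzRing_gt1 F.
elim: b u w => [|b IH] u w le_w.
  rewrite expr0 -(mulr1 1) -{1}(expr0 X) mXn_mnm2 mulr1 mcoeffX2.
  by rewrite muln0 !(eq_sym 0%N).
rewrite exprS {1}V2_mnm2 mulrBl mcoeffB !mcoeffXM2 leq0n /=.
set q := #|F| in q_gt1 IH le_w *; rewrite mulnS in le_w *.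
rewrite ifT; last by lia.
rewrite IH; last by lia.
have -> : ((u - 0 == 0) && (w - q == q * b) = (u == 0) && (w == q + q * b))%N.
  by apply/idP/idP; lia.
case: ifP => _; last by rewrite subr0.
rewrite IH; last by lia.
by rewrite (_ : (u - q.-1 == 0) && (w - 1 == q * b) = false)%N ?subr0 //; lia.
Qed.

Lemma mcoeff_XV2pow i b u w : (q * b <= w)%N ->
  (X ^+ i * V2 F ^+ b)@_(u, w) = ((u == i) && (w == q * b))%N%:R.
Proof.
move=> le_w; rewrite mXn_mnm2 mcoeffXM2 leq0n andbT subn0.
case: leqP => [le_iu | lt_ui]; last by rewrite (_ : (u == i) = false) //; lia.
by rewrite mcoeff_V2pow // (_ : (u - i == 0) = (u == i))%N //; lia.
Qed.

End V2Powers.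

Lemma QU2invB (F : finFieldType) N (f g : {mpoly F[2]}) :
  QU2inv N f -> QU2inv N g -> QU2inv N (f - g).
Proof.
move=> inv_f inv_g a; apply/inQidealP.
have -> : U2act a (f - g) - (f - g) = (U2act a f - f) - (U2act a g - g).
  by rewrite rmorphB /=; ring.
by apply: box_freeB; apply/inQidealP.
Qed.

Section Basis.
Variables (F : finFieldType) (p k m : nat).
Hypotheses (pr_p : prime p) (card_F : #|F| = (p ^ k)%N) (m_gt0 : (0 < m)%N).
Local Notation q := #|F|.
Local Notation N := (q ^ m)%N.
Local Notation M := (q ^ m.-1)%N.
Local Notation R := {mpoly F[2]}.
Local Notation X := (Defs.mX F).
Local Notation Y := (Defs.mY F).
Local Notation Idx := (famIdx N M).
Local Notation inFam := (@famPred q p N M).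
Local Notation fam := (@famPoly F N M).

Let pF : p \in [pchar F] := card_finPcharP card_F pr_p.
Let q_gt0 : (0 < q)%N := ltnW (finNzRing_gt1 F).

Lemma box_size_mul : N = (q * M)%N.
Proof. by rewrite -expnS prednK. Qed.

Lemma qmul_lt_box b : (b < M)%N -> (q * b < N)%N.
Proof. by rewrite box_size_mul ltn_pmul2l. Qed.

Lemma box_size_pexp : N = (p ^ (k * m))%N.
Proof. by rewrite card_F -expnM. Qed.

Lemma QU2inv_fam t : inFam t -> QU2inv N (fam t).
Proof.
case: t => [[i j] /andP[_ le_N] a | [i b] _ a] /=.
  exact: inQideal_U2act_XY pF a N i j _ (pfactor_dvdnn p j) le_N.
rewrite rmorphM !rmorphXn /= U2act_mX (U2act_V2 pF card_F) subrr.
by apply/inQidealP; apply: box_free0.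
Qed.

Definition famComb (c : Idx -> F) : R := \sum_(t | inFam t) c t *: fam t.

Lemma famCombD c1 c2 : famComb (fun t => c1 t + c2 t) = famComb c1 + famComb c2.
Proof. by rewrite -big_split; apply: eq_bigr => t _; rewrite scalerDl. Qed.

Lemma QU2inv_famComb c : QU2inv N (famComb c).
Proof.
move=> a; apply/inQidealP; rewrite linear_sum -sumrB; apply: box_free_sum => t fam_t.
by rewrite linearZ -scalerBr; apply/box_freeZ/inQidealP/QU2inv_fam.
Qed.

Lemma mcoeff_famComb c u w :
  (famComb c)@_(u, w) =
    \sum_(ij : 'I_N * 'I_N | inFam (inl ij))
        c (inl ij) * (X ^+ ij.1 * Y ^+ ij.2)@_(u, w)
  + \sum_(ab : 'I_N * 'I_M) c (inr ab) * (X ^+ ab.1 * V2 F ^+ ab.2)@_(u, w).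
Proof.
rewrite raddf_sum big_sumType /=.
by congr (_ + _); apply: eq_bigr => t _; rewrite mcoeffZ.
Qed.

Lemma mcoeff_famComb_XV c (ab : 'I_N * 'I_M) :
  (forall ab' : 'I_N * 'I_M, (ab.2 < ab'.2)%N -> c (inr ab') = 0) ->
  (famComb c)@_(ab.1, q * ab.2) = c (inr ab).
Proof.
case: ab => u b /= c_above.
rewrite mcoeff_famComb big1 ?add0r => [|[i j] /andP[not_qj _]]; last first.
  have /negbTE ne_j : j != q * b :> nat.
    by apply: contraNneq not_qj => ->; apply: dvdn_mulr.
  by rewrite mXY_mnm2 mcoeffX2 ne_j andbF mulr0.
rewrite (bigD1 (u, b)) //= mcoeff_XV2pow // !eqxx mulr1 big1 ?addr0 //.
move=> -[i b'] /= ne_ub.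
have [lt_b | le_b] := ltnP b b'; first by rewrite c_above ?mul0r.
rewrite mcoeff_XV2pow ?leq_mul2l ?le_b ?orbT //.
have [Ei | _] := eqVneq (u : nat) i; last by rewrite mulr0.
have [Eb | _] := eqVneq (q * b)%N (q * b')%N; last by rewrite andbF mulr0.
case/eqP: ne_ub; congr (_, _); apply/val_inj => //=.
by apply/eqP; rewrite -(eqn_pmul2l q_gt0) Eb.
Qed.

Lemma mcoeff_famComb_XY c (ij : 'I_N * 'I_N) :
  (forall ab, c (inr ab) = 0) ->
  (famComb c)@_(ij.1, ij.2) = if inFam (inl ij) then c (inl ij) else 0.
Proof.
case: ij => u w /= c_XV0.
rewrite mcoeff_famComb [X in _ + X]big1 ?addr0 => [|ab _]; last by rewrite c_XV0 mul0r.
have XY_coef (ij : 'I_N * 'I_N) : (X ^+ ij.1 * Y ^+ ij.2)@_(u, w) = (ij == (u, w))%:R.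
  by case: ij => i j; rewrite mXY_mnm2 mcoeffX2.
under eq_bigr => ij _ do rewrite XY_coef.
case: ifP => fam_uw.
  rewrite (bigD1 (u, w)) //= eqxx mulr1 big1 ?addr0 // => ij /andP[_ /negbTE->].
  by rewrite mulr0.
rewrite big1 // => ij fam_ij.
have /negbTE -> : ij != (u, w) by apply: contraFneq fam_uw => E; rewrite E in fam_ij.
by rewrite mulr0.
Qed.

Lemma famComb_free c : box_free N (famComb c) -> forall t, inFam t -> c t = 0.
Proof.
move=> c_free.
have c_XV d (ab : 'I_N * 'I_M) : (M <= ab.2 + d)%N -> c (inr ab) = 0.
  elim: d ab => [|d IH] ab le_M; first by rewrite addn0 leqNgt ltn_ord in le_M.
  rewrite -(mcoeff_famComb_XV (ab := ab)) ?c_free // => [|ab' lt_b]; last first.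
    by apply: IH; lia.
  exact: qmul_lt_box.
case=> [ij fam_ij | ab _]; last by apply: (c_XV M); rewrite leq_addl.
have := mcoeff_famComb_XY (c := c) ij (fun ab => c_XV M ab (leq_addl _ _)).
by rewrite fam_ij c_free.
Qed.

Lemma famComb_span_of_XVcoef0 g : QU2inv N g ->
  (forall i b, (i < N)%N -> (b < M)%N -> g@_(i, q * b) = 0) ->
  exists c, box_free N (g - famComb c).
Proof.
move=> inv_g g_XV0.
pose c (t : Idx) := if t is inl ij then g@_(ij.1, ij.2) else 0.
exists c; set g1 := g - famComb c; set h := box_trunc N g1.
suff h0 : h = 0 by have := box_free_sub_trunc (N := N) g1; rewrite -/h h0 subr0.
have inv_h : QU2inv N h.
  have inv_g1 : QU2inv N g1 := QU2invB inv_g (QU2inv_famComb c).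
  have inv_g1h : QU2inv N (g1 - h).
    move=> a; apply/inQidealP; apply: box_freeB; last exact: box_free_sub_trunc.
    rewrite box_size_pexp; apply: box_free_U2act => //.
    by rewrite -box_size_pexp; apply: box_free_sub_trunc.
  by rewrite -[h](subKr g1); apply: QU2invB.
apply: (QU2inv_eq0 pF card_F inv_h) => u w.
  by rewrite mcoeff_box_trunc; case: ifP => // /andP[]; lia.
move=> lt_uN lt_wN good; rewrite mcoeff_box_trunc lt_uN lt_wN mcoeffB.
have := mcoeff_famComb_XY (c := c) (Ordinal lt_uN, Ordinal lt_wN) (fun _ => erefl).
rewrite /= => ->.
have [/dvdnP[b Ew] | not_qw] := boolP (q %| w)%N; last first.
  by move: good; rewrite (negbTE not_qw) /= => ->; rewrite subrr.
rewrite Ew /= subr0 mulnC g_XV0 //.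
by rewrite -(ltn_pmul2l q_gt0) -box_size_mul mulnC -Ew.
Qed.

Lemma famComb_span_of_XVcoef0_from n : (n <= M)%N -> forall g, QU2inv N g ->
  (forall i b, (i < N)%N -> (n <= b < M)%N -> g@_(i, q * b) = 0) ->
  exists c, box_free N (g - famComb c).
Proof.
elim: n => [|n IH] le_nM g inv_g g_XV0.
  by apply: famComb_span_of_XVcoef0 => // i b lt_iN lt_bM; apply: g_XV0.
pose d (t : Idx) :=
  if t is inr ab then (if ab.2 == n :> nat then g@_(ab.1, q * n) else 0) else 0.
have [||c g_c] := IH (ltnW le_nM) (g - famComb d).
- exact: QU2invB inv_g (QU2inv_famComb d).
- move=> i b lt_iN /andP[le_nb lt_bM].
  have := mcoeff_famComb_XV (c := d) (ab := (Ordinal lt_iN, Ordinal lt_bM)).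
  rewrite mcoeffB /= => -> => [|ab' lt_b]; last by rewrite ifN_eqC //; lia.
  have [-> | ne_bn] := eqVneq b n; first by rewrite subrr.
  by rewrite g_XV0 ?subr0 //; lia.
- by exists (fun t => d t + c t); rewrite famCombD opprD addrA.
Qed.

End Basis.

Theorem mainTheorem12 (F : finFieldType) (p k m : nat) :
  prime p -> (0 < k)%N -> #|F| = (p ^ k)%N -> (1 <= m)%N ->
  @isBasisQU2 F (#|F| ^ m)%N _ (@famPred #|F| p (#|F| ^ m) (#|F| ^ m.-1))
    (@famPoly F (#|F| ^ m) (#|F| ^ m.-1)).
Proof.
move=> pr_p _ card_F m_gt0; split.
- exact: QU2inv_fam pr_p card_F.
- by move=> c /inQidealP; apply: famComb_free pr_p card_F m_gt0 c.
- move=> g inv_g.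
  have [|c /inQidealP] := famComb_span_of_XVcoef0_from pr_p card_F m_gt0 (leqnn _) inv_g.
    by move=> i b _ /andP[le_Mb lt_bM]; rewrite ltnNge le_Mb in lt_bM.
  by exists c.
Qed.
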